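(* Let $(X_i)_{i\in\mathbb{Z}}$ be a stationary strongly nonergodic process over a finite alphabet $\mathbb{X}$, with associated IID binary process $(Z_k)_{k\in\mathbb{N}}$ ($P(Z_k=0)=P(Z_k=1)=\tfrac12$) and functions $s_k:\mathbb{X}^*\to\{0,1\}$ satisfying $\lim_{n\to\infty}P(s_k(X_{t+1:t+n})=Z_k)=1$ for all $k\in\mathbb{N}$, $t\in\mathbb{Z}$. Let $\delta\in(\tfrac12,1)$, $U_\delta(n):=\{k\in\mathbb{N}:P(s_k(X_{1:n})=Z_k)\ge\delta\}$ and $$H^U(n):=hn+[\log2-\eta(\delta)]\operatorname{card}U_\delta(n),\qquad \eta(p):=-p\log p-(1-p)\log(1-p).$$ Then $H(n)\ge H^U(n)$ for all $n$, and $$\lim_{n\to\infty}H(n)/n=h=\lim_{n\to\infty}H^U(n)/n.$$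
   Context: $H(n):=H(X_{t+1:t+n})=-\mathbb{E}\log P(X_{t+1:t+n})$ (natural log), $h:=\lim_n H(n)/n$ is the entropy rate. A process is strongly nonergodic if such $(Z_k)$ and $s_k$ as in the claim exist. *)

From HB Require Import structures.
From mathcomp Require Import all_boot all_order all_algebra.
From mathcomp Require Import all_classical all_reals all_analysis.
Set Implicit Arguments. Unset Strict Implicit. Unset Printing Implicit Defensive.
Import Order.TTheory GRing.Theory Num.Theory numFieldNormedType.Exports.
Local Open Scope classical_set_scope.
Local Open Scope ring_scope.

Section Process.
Context {R : realType} {d : measure_display} {Omega : measurableType d}
        {A : finType}.

Definition blk (X : int -> Omega -> A) (t : int) (n : nat) (o : Omega)
  : n.-tuple A := [tuple X (t + (i.+1)%:Z)%R o | i < n].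

Definition process_measurable (X : int -> Omega -> A) : Prop :=
  forall (i : int) (a : A), measurable [set o | X i o = a].

Definition stationary (P : probability Omega R) (X : int -> Omega -> A) : Prop :=
  forall (t : int) (n : nat) (w : n.-tuple A),
    P [set o | blk X t n o = w] = P [set o | blk X 0 n o = w].

(* block entropy H(n) = H(X_{1:n}) with the natural logarithm (0 ln 0 = 0) *)
Definition block_entropy (P : probability Omega R) (X : int -> Omega -> A)
  (n : nat) : R :=
  - \sum_(w : n.-tuple A)
      fine (P [set o | blk X 0 n o = w]) * ln (fine (P [set o | blk X 0 n o = w])).

Definition entropy_rate (P : probability Omega R) (X : int -> Omega -> A) : R :=
  limn ((fun n => block_entropy P X n / n%:R) : R^nat).

Definition iid_fair_bits (P : probability Omega R) (Z : nat -> Omega -> bool)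
  : Prop :=
  [/\ forall k b, measurable [set o | Z k o = b],
      forall k b, P [set o | Z k o = b] = (2^-1)%:E &
      forall (s : seq nat) (b : nat -> bool), uniq s ->
        fine (P (\big[setI/setT]_(k <- s) [set o | Z k o = b k]))
        = \prod_(k <- s) fine (P [set o | Z k o = b k])].

Definition strongly_nonergodic_with (P : probability Omega R)
  (X : int -> Omega -> A) (Z : nat -> Omega -> bool) (s : nat -> seq A -> bool)
  : Prop :=
  iid_fair_bits P Z /\
  forall (k : nat) (t : int),
    (fun n => fine (P [set o | s k (blk X t n o) = Z k o])) @ \oo --> (1 : R).

Definition U_set (P : probability Omega R) (X : int -> Omega -> A)
  (Z : nat -> Omega -> bool) (s : nat -> seq A -> bool) (delta : R) (n : nat)
  : set nat :=
  [set k | (delta%:E <= P [set o | s k (blk X 0 n o) = Z k o])%E].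

End Process.

Definition eta {R : realType} (p : R) : R :=
  - p * ln p - (1 - p) * ln (1 - p).

(* cardinality of a set of naturals, in extended reals (+oo if infinite) *)
Definition ecard {R : realType} (U : set nat) : \bar R :=
  (\sum_(k <oo) (if `[< U k >] then 1 else 0)%:E)%E.

Definition HU {R : realType} {d : measure_display} {Omega : measurableType d}
  {A : finType} (P : probability Omega R) (X : int -> Omega -> A)
  (Z : nat -> Omega -> bool) (s : nat -> seq A -> bool) (delta : R) (n : nat)
  : \bar R :=
  ((entropy_rate P X * n%:R)%:E
   + (ln 2 - eta delta)%:E * ecard (U_set P X Z s delta n))%E.

From Pilot Require Import Defs.
From HB Require Import structures.
From mathcomp Require Import all_boot all_order all_algebra.
From mathcomp Require Import all_classical all_reals all_analysis.
From mathcomp Require Import ring lra.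
Import Order.TTheory GRing.Theory Num.Theory numFieldNormedType.Exports.
Local Open Scope classical_set_scope.
Local Open Scope ring_scope.

(* Strong subadditivity of entropy makes the block entropy H(n) of a stationary
   process concave, so H(n)/n decreases to h and H(n) - n h >= H(n) + H(m) - H(n + m),
   the mutual information between X_{1:n} and X_{n+1:n+m}.  Take a finite set K of
   indices in U_delta(n).  The fair bits (Z_k)_{k in K} have entropy card K * log 2,
   and I(U;V) >= H(W) - H(W|U) - H(W|V) for W = (Z_k)_{k in K}.  By Fano's inequality
   H(W|X_{1:n}) <= card K * eta(delta), while H(W|X_{n+1:n+m}) -> 0 as m -> oo.
   Hence H(n) - n h >= card K * (log 2 - eta(delta)), which gives H(n) >= H^U(n); the
   limit of H^U(n)/n follows by squeezing it between h and H(n)/n. *)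

Lemma cons_tuple_inj {T : Type} {n : nat} {x y : T} {s t : n.-tuple T} :
  cons_tuple x s = cons_tuple y t -> x = y /\ s = t.
Proof. by move=> /(congr1 val) /= [-> /val_inj ->]. Qed.

Lemma cat_tuple_inj {T : eqType} {m n : nat} {x x' : m.-tuple T} {y y' : n.-tuple T} :
  cat_tuple x y = cat_tuple x' y' -> x = x' /\ y = y'.
Proof.
move=> /(congr1 val) /eqP /=.
by rewrite eqseq_cat ?size_tuple // => /andP[/eqP/val_inj -> /eqP/val_inj ->].
Qed.

Lemma xlny_sub_xlnx_le {R : realType} {x y : R} :
  0 <= x -> 0 <= y -> (0 < x -> 0 < y) -> x * ln y - x * ln x <= y - x.
Proof.
move=> x0 y0 xy; have [->|xn0] := eqVneq x 0; first by rewrite !mul0r !subr0.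
have xp : 0 < x by rewrite lt0r xn0.
have yp := xy xp.
have ln_le : ln (y / x) <= y / x - 1.
  have := @le_ln1Dx R (y / x - 1); rewrite addrCA subrr addr0; apply.
  by rewrite ltrBrDl subrr divr_gt0.
rewrite -mulrBr -ln_div ?posrE //; apply: le_trans (ler_wpM2l x0 ln_le) _.
by rewrite mulrBr mulr1 mulrCA divff ?mulr1.
Qed.

Section FiniteEntropy.
Context {R : realType} {d : measure_display} {Omega : measurableType d}
  (P : probability Omega R).

Definition finrv {T : finType} (f : Omega -> T) :=
  forall v, measurable [set o | f o = v].

Definition pmass {T : finType} (f : Omega -> T) (v : T) : R :=
  fine (P [set o | f o = v]).

Definition entropy {T : finType} (f : Omega -> T) : R :=
  - \sum_v pmass f v * ln (pmass f v).

Definition joint {T U : finType} (f : Omega -> T) (g : Omega -> U) :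
  Omega -> T * U := fun o => (f o, g o).

Definition cond_entropy {T U : finType} (f : Omega -> T) (g : Omega -> U) :=
  entropy (joint f g) - entropy g.

Definition mutual_info {T U : finType} (f : Omega -> T) (g : Omega -> U) :=
  entropy f + entropy g - entropy (joint f g).

Section OneVariable.
Context {T : finType} {f : Omega -> T} (mf : finrv f).

Lemma pmassE v : P [set o | f o = v] = (pmass f v)%:E.
Proof. by rewrite /pmass fineK // fin_num_measure. Qed.

Lemma pmass_ge0 v : 0 <= pmass f v.
Proof. by rewrite /pmass fine_ge0. Qed.

Lemma measurable_preimage (Q : pred T) : measurable [set o | Q (f o)].
Proof.
rewrite (_ : [set o | _] = \bigcup_(v in [set v | Q v]) [set o | f o = v]).
  by apply: fin_bigcup_measurable => // v _; exact: mf.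
by apply/seteqP; split => o /=; [exists (f o) | case=> v /= Qv ->].
Qed.

Lemma measure_preimage_seq (r : seq T) : uniq r ->
  P [set o | f o \in r] = (\sum_(v <- r) pmass f v)%:E.
Proof.
elim: r => [|v r IH] /=.
  by rewrite big_nil (_ : [set o | _] = set0) ?measure0 //; apply/seteqP; split.
move=> /andP[vNr /IH Pr].
have -> : [set o | f o \in v :: r] = [set o | f o = v] `|` [set o | f o \in r].
  apply/seteqP; split => o /=; rewrite in_cons; first by case/orP => [/eqP|]; auto.
  by case=> [->|->]; rewrite ?eqxx ?orbT.
rewrite measureU //; last 2 first.
- exact: (measurable_preimage (fun w => w \in r)).
- by apply/seteqP; split => o // [/= -> fr]; rewrite fr in vNr.
by rewrite big_cons EFinD; congr (_ + _)%E; [exact: pmassE | exact: Pr].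
Qed.

Lemma measure_preimage (Q : pred T) :
  P [set o | Q (f o)] = (\sum_(v | Q v) pmass f v)%:E.
Proof.
rewrite -big_filter -measure_preimage_seq ?filter_uniq ?index_enum_uniq //.
by congr (P _); apply/seteqP; split => o /=; rewrite mem_filter mem_index_enum andbT.
Qed.

Lemma pmass_sum1 : \sum_v pmass f v = 1.
Proof.
have := measure_preimage xpredT.
by rewrite (_ : [set o | _] = setT) ?probability_setT => [[]|]; last exact/seteqP.
Qed.

Lemma pmass_le1 v : pmass f v <= 1.
Proof.
rewrite -pmass_sum1 (bigD1 v) //= lerDl.
by apply: sumr_ge0 => *; exact: pmass_ge0.
Qed.

Lemma finrv_comp {U : finType} (phi : T -> U) : finrv (phi \o f).
Proof.
move=> u; rewrite (_ : [set o | _] = [set o | phi (f o) == u]).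
  exact: (measurable_preimage (fun v => phi v == u)).
by apply/seteqP; split => o /= /eqP.
Qed.

Lemma pmass_comp {U : finType} (phi : T -> U) u :
  pmass (phi \o f) u = \sum_(v | phi v == u) pmass f v.
Proof.
rewrite /pmass (_ : [set o | _] = [set o | phi (f o) == u]).
  by rewrite (measure_preimage (fun v => phi v == u)).
by apply/seteqP; split => o /= /eqP.
Qed.

Lemma pmass_le_comp {U : finType} (phi : T -> U) v :
  pmass f v <= pmass (phi \o f) (phi v).
Proof.
rewrite pmass_comp (bigD1 v) //= lerDl.
by apply: sumr_ge0 => *; exact: pmass_ge0.
Qed.

Lemma entropy_comp {U : finType} (phi : T -> U) :
  entropy (phi \o f) = - \sum_v pmass f v * ln (pmass (phi \o f) (phi v)).
Proof.
rewrite /entropy; congr (- _).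
under eq_bigr => u _ do rewrite pmass_comp big_distrl /=.
rewrite [RHS](partition_big phi xpredT) //=; apply: eq_bigr => u _.
by apply: eq_bigr => v /eqP phiv; rewrite pmass_comp phiv.
Qed.

Lemma entropy_ge0 : 0 <= entropy f.
Proof.
rewrite oppr_ge0; apply: sumr_le0 => v _.
by rewrite mulr_ge0_le0 ?pmass_ge0 // ln_le0 ?pmass_le1.
Qed.

Lemma entropy_le_cross (r : T -> R) : (forall v, 0 <= r v) ->
  (forall v, 0 < pmass f v -> 0 < r v) -> \sum_v r v <= 1 ->
  entropy f <= - \sum_v pmass f v * ln (r v).
Proof.
move=> r_ge0 r_gt0 r_le1; rewrite lerN2 -subr_ge0 -sumrB.
apply: le_trans (_ : 0 <= \sum_v (pmass f v - r v)) _.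
  by rewrite sumrB pmass_sum1 subr_ge0.
apply: ler_sum => v _.
have := xlny_sub_xlnx_le (pmass_ge0 v) (r_ge0 v) (@r_gt0 v); lra.
Qed.

End OneVariable.

Lemma finrv_joint {T U : finType} {f : Omega -> T} {g : Omega -> U} :
  finrv f -> finrv g -> finrv (joint f g).
Proof.
move=> mf mg [a b].
rewrite (_ : [set o | _] = [set o | f o = a] `&` [set o | g o = b]).
  exact: measurableI.
by apply/seteqP; split => o /=; rewrite /joint => -[-> ->].
Qed.

Lemma entropy_inj {T U : finType} {f : Omega -> T} {h : Omega -> U}
    (phi : T -> U) :
  injective phi -> finrv f -> (forall o, h o = phi (f o)) -> entropy h = entropy f.
Proof.
move=> phi_inj mf hE; rewrite (_ : h = phi \o f); last exact: funext.
rewrite entropy_comp //; congr (- _); apply: eq_bigr => v _.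
by rewrite pmass_comp // (eq_bigl (pred1 v)) ?big_pred1_eq // => w; rewrite inj_eq.
Qed.

Lemma entropy_jointC {T U : finType} {f : Omega -> T} {g : Omega -> U} :
  finrv f -> finrv g -> entropy (joint f g) = entropy (joint g f).
Proof.
move=> mf mg; apply: (entropy_inj (fun p => (p.2, p.1))); last by [].
  by move=> [? ?] [? ?] [-> ->].
exact: finrv_joint.
Qed.

Lemma sum_pmass_joint {T U : finType} {f : Omega -> T} {g : Omega -> U} z :
  finrv f -> finrv g -> \sum_x pmass (joint f g) (x, z) = pmass g z.
Proof.
move=> mf mg; rewrite (_ : pmass g z = pmass (snd \o joint f g) z) //.
rewrite pmass_comp; last exact: finrv_joint.
symmetry; transitivity (\sum_x \sum_(y | y == z) pmass (joint f g) (x, y)).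
  by rewrite pair_big; apply: eq_big => -[].
by apply: eq_bigr => x _; rewrite big_pred1_eq.
Qed.

Lemma cond_entropy_joint_le {T1 T2 T3 : finType}
    {f : Omega -> T1} {g : Omega -> T2} {c : Omega -> T3} :
  finrv f -> finrv g -> finrv c ->
  cond_entropy (joint f g) c <= cond_entropy f c + cond_entropy g c.
Proof.
move=> mf mg mc; set F := joint (joint f g) c.
have mF : finrv F by do 2?apply: finrv_joint.
pose fc (w : (T1 * T2) * T3) := (w.1.1, w.2).
pose gc (w : (T1 * T2) * T3) := (w.1.2, w.2).
pose pa := pmass (joint f c); pose pb := pmass (joint g c); pose pc := pmass c.
pose r w := pa (fc w) * pb (gc w) / pc w.2.
have marg_gt0 w : 0 < pmass F w -> [/\ 0 < pa (fc w), 0 < pb (gc w) & 0 < pc w.2].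
  move=> Fw; split.
  - exact: lt_le_trans Fw (pmass_le_comp mF fc w).
  - exact: lt_le_trans Fw (pmass_le_comp mF gc w).
  - exact: lt_le_trans Fw (pmass_le_comp mF snd w).
(* Gibbs' inequality against the conditionally independent coupling of f and g given c *)
have r_le1 : \sum_w r w <= 1.
  rewrite -(pmass_sum1 mc) le_eqVlt; apply/orP; left; apply/eqP.
  rewrite -(pair_big xpredT xpredT (fun xy z => r (xy, z))) /=.
  rewrite -(pair_big xpredT xpredT (fun x y => \sum_z r ((x, y), z))) /=.
  under eq_bigr => x _ do rewrite exchange_big /=.
  rewrite exchange_big /=; apply: eq_bigr => z _.
  transitivity (\sum_x \sum_y pa (x, z) / pc z * pb (y, z)).
    by apply: eq_bigr => x _; apply: eq_bigr => y _; rewrite /r mulrAC.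
  under eq_bigr => x _ do rewrite -big_distrr /=.
  rewrite -big_distrl -mulr_suml /= !sum_pmass_joint //.
  by rewrite /pc; have [->|pc0] := eqVneq (pmass c z) 0; rewrite ?mul0r ?divff ?mul1r.
have r_ge0 w : 0 <= r w by rewrite divr_ge0 ?mulr_ge0 ?pmass_ge0.
have r_gt0 w : 0 < pmass F w -> 0 < r w.
  by case/marg_gt0 => *; rewrite divr_gt0 ?mulr_gt0.
have ln_r w : pmass F w * ln (r w) = pmass F w * ln (pa (fc w))
    + pmass F w * ln (pb (gc w)) - pmass F w * ln (pc w.2).
  have [->|Fw0] := eqVneq (pmass F w) 0; first by rewrite !mul0r subr0 addr0.
  have [pa0 pb0 pc0] : [/\ 0 < pa (fc w), 0 < pb (gc w) & 0 < pc w.2].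
    by apply: marg_gt0; rewrite lt0r Fw0 pmass_ge0.
  by rewrite ln_div ?lnM ?posrE ?mulr_gt0 // -mulrDr -mulrBr.
have Ha : entropy (joint f c) = - \sum_w pmass F w * ln (pa (fc w)).
  exact (entropy_comp mF fc).
have Hb : entropy (joint g c) = - \sum_w pmass F w * ln (pb (gc w)).
  exact (entropy_comp mF gc).
have Hc : entropy c = - \sum_w pmass F w * ln (pc w.2).
  exact (entropy_comp mF snd).
have := @entropy_le_cross _ _ mF r r_ge0 r_gt0 r_le1.
rewrite /cond_entropy (eq_bigr _ (fun w _ => ln_r w)) !big_split /= sumrN Ha Hb Hc.
lra.
Qed.

Lemma cond_entropy_le {T U : finType} {f : Omega -> T} {g : Omega -> U} :
  finrv f -> finrv g -> cond_entropy f g <= entropy f.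
Proof.
move=> mf mg; have mfg := finrv_joint mf mg.
pose r (w : T * U) := pmass f w.1 * pmass g w.2.
have r_ge0 w : 0 <= r w by rewrite mulr_ge0 ?pmass_ge0.
have marg_gt0 w : 0 < pmass (joint f g) w -> 0 < pmass f w.1 /\ 0 < pmass g w.2.
  move=> pw; split; apply: lt_le_trans pw _.
    exact (pmass_le_comp mfg fst w).
  exact (pmass_le_comp mfg snd w).
have r_gt0 w : 0 < pmass (joint f g) w -> 0 < r w.
  by case/marg_gt0 => *; rewrite mulr_gt0.
have r_le1 : \sum_w r w <= 1.
  have -> : \sum_w r w = (\sum_x pmass f x) * (\sum_y pmass g y).
    by rewrite big_distrlr pair_bigA.
  by rewrite !pmass_sum1 // mulr1.
have ln_r w : pmass (joint f g) w * ln (r w) =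
    pmass (joint f g) w * ln (pmass f w.1) + pmass (joint f g) w * ln (pmass g w.2).
  have [->|pw0] := eqVneq (pmass (joint f g) w) 0; first by rewrite !mul0r addr0.
  have [pf0 pg0] : 0 < pmass f w.1 /\ 0 < pmass g w.2.
    by apply: marg_gt0; rewrite lt0r pw0 pmass_ge0.
  by rewrite lnM ?posrE // mulrDr.
have Hf : entropy f = - \sum_w pmass (joint f g) w * ln (pmass f w.1).
  exact (entropy_comp mfg fst).
have Hg : entropy g = - \sum_w pmass (joint f g) w * ln (pmass g w.2).
  exact (entropy_comp mfg snd).
have := @entropy_le_cross _ _ mfg r r_ge0 r_gt0 r_le1.
rewrite /cond_entropy (eq_bigr _ (fun w _ => ln_r w)) big_split /= Hf Hg; lra.
Qed.

Lemma cond_entropy_ge0 {T U : finType} {f : Omega -> T} {g : Omega -> U} :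
  finrv f -> finrv g -> 0 <= cond_entropy f g.
Proof.
move=> mf mg; have := cond_entropy_joint_le mf mf mg.
have -> : cond_entropy (joint f f) g = cond_entropy f g.
  congr (_ - _); apply: (entropy_inj (fun w => ((w.1, w.1), w.2))) => //.
    by move=> [? ?] [? ?] [-> _ ->].
  exact: finrv_joint.
lra.
Qed.

Lemma cond_entropy_comp_le {T U V : finType} {z : Omega -> V} {f : Omega -> T}
    (phi : T -> U) :
  finrv z -> finrv f -> cond_entropy z f <= cond_entropy z (phi \o f).
Proof.
move=> mz mf; have := cond_entropy_joint_le mz mf (finrv_comp mf phi).
rewrite /cond_entropy.
have -> : entropy (joint (joint z f) (phi \o f)) = entropy (joint z f).
  apply: (entropy_inj (fun w => (w, phi w.2))) => //; last exact: finrv_joint.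
  by move=> ? ? [].
have -> : entropy (joint f (phi \o f)) = entropy f.
  by apply: (entropy_inj (fun x => (x, phi x))) => // ? ? [].
lra.
Qed.

Lemma mutual_info_ge {T U V : finType}
    {u : Omega -> T} {v : Omega -> U} {w : Omega -> V} :
  finrv u -> finrv v -> finrv w ->
  entropy w - cond_entropy w u - cond_entropy w v <= mutual_info u v.
Proof.
move=> mu mv mw; have := cond_entropy_joint_le mu mv mw.
have := cond_entropy_ge0 mw (finrv_joint mu mv).
rewrite /cond_entropy /mutual_info !(entropy_jointC mw) ?(entropy_jointC mu) //.
  by rewrite (entropy_jointC mv) //; lra.
exact: finrv_joint.
Qed.

Lemma cond_entropy_inj {T1 T2 U1 U2 : finType}
    {f : Omega -> T1} {g : Omega -> T2} {f' : Omega -> U1} {g' : Omega -> U2}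
    (phi : T1 -> U1) (psi : T2 -> U2) :
  injective phi -> injective psi -> finrv f -> finrv g ->
  (forall o, f' o = phi (f o)) -> (forall o, g' o = psi (g o)) ->
  cond_entropy f' g' = cond_entropy f g.
Proof.
move=> phi_inj psi_inj mf mg f'E g'E; congr (_ - _); last exact: entropy_inj g'E.
apply: (entropy_inj (fun w => (phi w.1, psi w.2))); last first.
- by move=> o; rewrite /joint f'E g'E.
- exact: finrv_joint.
by move=> [? ?] [? ?] [/phi_inj -> /psi_inj ->].
Qed.

Lemma cond_entropy_joint2_le {T1 T2 U1 U2 : finType}
    {a1 : Omega -> T1} {a2 : Omega -> T2} {b1 : Omega -> U1} {b2 : Omega -> U2} :
  finrv a1 -> finrv a2 -> finrv b1 -> finrv b2 ->
  cond_entropy (joint a1 a2) (joint b1 b2) <= cond_entropy a1 b1 + cond_entropy a2 b2.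
Proof.
move=> ma1 ma2 mb1 mb2; have mb := finrv_joint mb1 mb2.
have D1 : cond_entropy a1 (joint b1 b2) <= cond_entropy a1 b1 :=
  cond_entropy_comp_le fst ma1 mb.
have D2 : cond_entropy a2 (joint b1 b2) <= cond_entropy a2 b2 :=
  cond_entropy_comp_le snd ma2 mb.
have := cond_entropy_joint_le ma1 ma2 mb; lra.
Qed.

Lemma entropy_bool {e : Omega -> bool} : finrv e -> entropy e = Defs.eta (pmass e true).
Proof.
move=> me; have := pmass_sum1 me; rewrite big_bool /= => sum1.
rewrite /entropy big_bool /= (_ : pmass e false = 1 - pmass e true).
  by rewrite /Defs.eta opprD mulNr.
lra.
Qed.

Lemma cond_entropy_bool_le {a b : Omega -> bool} : finrv a -> finrv b ->
  cond_entropy a b <= Defs.eta (pmass (fun o => b o == a o) true).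
Proof.
move=> ma mb; pose e o := b o == a o.
have me : finrv e := finrv_comp (finrv_joint mb ma) (fun p => p.1 == p.2).
rewrite -entropy_bool //; apply: le_trans (cond_entropy_le me mb).
rewrite /cond_entropy (entropy_inj (fun p => (if p.1 then p.2 else ~~ p.2, p.2))
  (f := joint e b)) //.
- by move=> [[] []] [[] []].
- exact: finrv_joint.
- by move=> o; rewrite /joint /e; case: (a o); case: (b o).
Qed.

Definition bits (F : nat -> Omega -> bool) (l : seq nat) :
  Omega -> (size l).-tuple bool :=
  fun o => map_tuple (fun k => F k o) (in_tuple l).

Lemma bits_cons F k l o :
  bits F (k :: l) o = cons_tuple (F k o) (bits F l o).
Proof. exact: val_inj. Qed.

Lemma finrv_bits F l : (forall k, finrv (F k)) -> finrv (bits F l).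
Proof.
move=> mF; elim: l => [|k l IH].
  move=> v; rewrite (_ : [set o | _] = setT) //; apply/seteqP; split => o //= _.
  by rewrite (tuple0 v) (tuple0 (bits F [::] o)).
rewrite (_ : bits F (k :: l) = (fun p => cons_tuple p.1 p.2) \o joint (F k) (bits F l)).
  exact/finrv_comp/finrv_joint.
by apply/funext => o; rewrite bits_cons.
Qed.

Lemma cond_entropy_bits_le (a b : nat -> Omega -> bool) l :
  (forall k, finrv (a k)) -> (forall k, finrv (b k)) ->
  cond_entropy (bits a l) (bits b l)
    <= \sum_(k <- l) Defs.eta (pmass (fun o => b k o == a k o) true).
Proof.
move=> ma mb; elim: l => [|k l IH].
  rewrite big_nil /cond_entropy (entropy_inj (fun t => ([tuple], t)) (f := bits b [::])).
  - by rewrite subrr.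
  - by move=> ? ? [].
  - exact: finrv_bits.
  - by move=> o; rewrite /joint (tuple0 (bits a [::] o)).
rewrite big_cons (cond_entropy_inj (f := joint (a k) (bits a l))
  (g := joint (b k) (bits b l)) (fun p => cons_tuple p.1 p.2) (fun p => cons_tuple p.1 p.2)).
- apply: le_trans (cond_entropy_joint2_le (ma k) (finrv_bits a l ma) (mb k)
    (finrv_bits b l mb)) _.
  exact: lerD (cond_entropy_bool_le (ma k) (mb k)) IH.
- by move=> [x s] [y t] /cons_tuple_inj /= [-> ->].
- by move=> [x s] [y t] /cons_tuple_inj /= [-> ->].
- exact/finrv_joint/finrv_bits.
- exact/finrv_joint/finrv_bits.
- by move=> o; rewrite bits_cons.
- by move=> o; rewrite bits_cons.
Qed.

Lemma bits_preimage (Z : nat -> Omega -> bool) (l : seq nat) (t : seq bool) :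
  uniq l -> size t = size l ->
  [set o | map (fun k => Z k o) l = t] =
  \big[setI/setT]_(k <- l) [set o | Z k o = nth false t (index k l)].
Proof.
elim: l t => [|k l IH] [|x t] //=.
  by move=> _ _; rewrite big_nil; apply/seteqP; split.
move=> /andP[kNl ul] [szt]; rewrite big_cons /= eqxx /=.
rewrite (eq_big_seq (fun j => [set o | Z j o = nth false t (index j l)])).
  by rewrite -IH //; apply/seteqP; split => o /= [-> ->].
by move=> j jl /=; case: eqP jl kNl => // <- ->.
Qed.

Lemma entropy_fair_bits (Z : nat -> Omega -> bool) (l : seq nat) :
  iid_fair_bits P Z -> uniq l -> entropy (bits Z l) = (size l)%:R * ln 2.
Proof.
move=> [mZ fairZ indepZ] ul.
have pmass_bits t : pmass (bits Z l) t = 2^-1 ^+ size l.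
  rewrite /pmass (_ : [set o | _] = [set o | map (fun k => Z k o) l = val t]).
    rewrite bits_preimage ?size_tuple // indepZ // (eq_bigr (fun _ => 2^-1)).
      by elim: (l) => [|k l' IH]; rewrite ?big_nil ?big_cons ?IH ?exprS.
    by move=> k _; rewrite fairZ.
  by apply/seteqP; split => o /= => [<-|tE] //; apply: val_inj.
rewrite /entropy (eq_bigr _ (fun t _ => congr2 (fun a b => a * ln b)
  (pmass_bits t) (pmass_bits t))).
rewrite sumr_const card_tuple card_bool lnXn ?invr_gt0 // lnV ?posrE // -mulrnAl.
rewrite -mulr_natr natrX -exprMn mulVf ?pnatr_eq0 // expr1n mul1r.
by rewrite mulNrn opprK mulr_natl.
Qed.

Lemma cond_entropy_bits_decode_le {V : finType} (F : nat -> Omega -> bool)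
    (w : Omega -> V) (g : nat -> V -> bool) (l : seq nat) :
  (forall k, finrv (F k)) -> finrv w ->
  cond_entropy (bits F l) w
    <= \sum_(k <- l) Defs.eta (pmass (fun o => g k (w o) == F k o) true).
Proof.
move=> mF mw; pose decode y := map_tuple (fun k => g k y) (in_tuple l).
apply: le_trans (cond_entropy_comp_le decode (finrv_bits F l mF) mw) _.
exact: (cond_entropy_bits_le F (fun k o => g k (w o)) l mF (fun k => finrv_comp mw (g k))).
Qed.

(* Bits that can be read off both u and v force u and v to share their information. *)
Lemma mutual_info_ge_decoding {T U : finType} (u : Omega -> T) (v : Omega -> U)
    (F : nat -> Omega -> bool) (f : nat -> T -> bool) (g : nat -> U -> bool)
    (l : seq nat) :
  finrv u -> finrv v -> (forall k, finrv (F k)) ->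
  entropy (bits F l)
  - \sum_(k <- l) Defs.eta (pmass (fun o => f k (u o) == F k o) true)
  - \sum_(k <- l) Defs.eta (pmass (fun o => g k (v o) == F k o) true)
  <= mutual_info u v.
Proof.
move=> mu mv mF; apply: le_trans (mutual_info_ge mu mv (finrv_bits F l mF)).
have := cond_entropy_bits_decode_le F u f l mF mu.
have := cond_entropy_bits_decode_le F v g l mF mv.
lra.
Qed.

End FiniteEntropy.

Lemma natmul_bounded_le0 {R : realType} (a b : R) :
  (forall k : nat, k%:R * a <= b) -> a <= 0.
Proof.
move=> bounded; rewrite leNgt; apply/negP => a_gt0.
have /archi_boundP := divr_ge0 (normr_ge0 b) (ltW a_gt0).
rewrite ltr_pdivrMr // => /lt_le_trans/(_ (bounded _)).
by rewrite ltNge ler_norm.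
Qed.

Section ConcaveSequence.
Context {R : realType} (u : R^nat).
Hypotheses (u_ge0 : forall n, 0 <= u n)
  (u_concave : forall n, u n.+2 - u n.+1 <= u n.+1 - u n).

Local Notation rate := (limn (fun n => u n / n%:R)).

Lemma concave_incr_antitone i j : (i <= j)%N -> u j.+1 - u j <= u i.+1 - u i.
Proof.
elim: j => [|j IH]; first by rewrite leqn0 => /eqP ->.
rewrite leq_eqVlt => /orP[/eqP ->//|]; rewrite ltnS => /IH.
exact: le_trans (u_concave j).
Qed.

Lemma concave_le_tangent j k : u (j + k)%N <= u j + k%:R * (u j.+1 - u j).
Proof.
elim: k => [|k IH]; first by rewrite addn0 mul0r addr0.
have := @concave_incr_antitone _ _ (leq_addr k j).
rewrite addnS -natr1; lra.
Qed.

Lemma concave_natmul_incr_le n : n%:R * (u n.+1 - u n) <= u n.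
Proof.
elim: n => [|n IH]; first by rewrite mul0r u_ge0.
have := u_concave n; have := u_ge0 n; rewrite -natr1 => u_n_ge0 concave_n.
have n_ge0 : 0 <= n%:R :> R by [].
nra.
Qed.

Lemma concave_slope_antitone n : (0 < n)%N -> u n.+1 / n.+1%:R <= u n / n%:R.
Proof.
move=> n_gt0; rewrite ler_pdivrMr ?ltr0n // mulrAC ler_pdivlMr ?ltr0n //.
have := concave_natmul_incr_le n; rewrite -natr1 => h; nra.
Qed.

Lemma concave_slope_nonincreasing :
  nonincreasing_seq (fun n => u n.+1 / n.+1%:R).
Proof. by apply/nonincreasing_seqP => n; exact: concave_slope_antitone. Qed.

Lemma cvg_concave_slope : (fun n => u n / n%:R) @ \oo --> rate.
Proof.
have lb : has_lbound (range (fun n => u n.+1 / n.+1%:R)).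
  by exists 0 => _ [n _ <-]; rewrite divr_ge0.
have := nonincreasing_cvgn concave_slope_nonincreasing lb.
by rewrite (cvg_shiftS (fun n => u n / n%:R)) => /cvgP.
Qed.

Lemma rate_le_concave_slope n : (0 < n)%N -> rate <= u n / n%:R.
Proof.
case: n => // n _; have := cvg_concave_slope.
rewrite -(cvg_shiftS (fun n => u n / n%:R)) => slope_cvg.
have := nonincreasing_cvgn_ge concave_slope_nonincreasing (cvgP _ slope_cvg) n.
by rewrite (cvg_lim _ slope_cvg).
Qed.

(* The rate lies below every increment: otherwise the tangent bound would beat it linearly. *)
Lemma rate_le_concave_incr j : rate <= u j.+1 - u j.
Proof.
rewrite -subr_le0.
apply: (@natmul_bounded_le0 _ _ (u j - j%:R * rate - (rate - (u j.+1 - u j)))) => k.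
have := @rate_le_concave_slope _ (ltn0Sn (j + k)).
rewrite -addnS ler_pdivlMr ?ltr0n ?addn_gt0 ?orbT // natrD.
have := concave_le_tangent j k.+1; rewrite -natr1; lra.
Qed.

Lemma rate_le_concave_diff m n : n%:R * rate <= u (m + n)%N - u m.
Proof.
elim: n => [|n IH]; first by rewrite addn0 mul0r subrr.
have := rate_le_concave_incr (m + n); rewrite addnS -natr1; lra.
Qed.

End ConcaveSequence.

Section BlockEntropy.
Context {R : realType} {d : measure_display} {Omega : measurableType d}
  (P : probability Omega R) {A : finType} (X : int -> Omega -> A).

Lemma val_blk t n o : val (blk X t n o) = [seq X (t + i.+1%:Z) o | i <- iota 0 n].
Proof. by rewrite /blk /= -val_enum_ord -map_comp. Qed.

Lemma blk_cat t a b o :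
  blk X t (a + b) o = cat_tuple (blk X t a o) (blk X (t + a%:Z) b o).
Proof.
apply: val_inj; rewrite [LHS]val_blk.
rewrite (_ : val (cat_tuple _ _) = val (blk X t a o) ++ val (blk X (t + a%:Z) b o)) //.
rewrite !val_blk iotaD map_cat add0n; congr (_ ++ _).
rewrite -{1}(addn0 a) iotaDl -map_comp; apply: eq_map => i /=.
by rewrite -addnS PoszD addrA.
Qed.

Hypothesis mX : process_measurable X.

Lemma finrv_blk t n : finrv (blk X t n).
Proof.
elim: n t => [|n IH] t.
  move=> v; rewrite (_ : [set o | _] = setT) //; apply/seteqP; split => o //= _.
  by rewrite (tuple0 v) (tuple0 (blk X t 0 o)).
have mX1 : finrv (blk X t 1).
  rewrite (_ : blk X t 1 = (fun a => [tuple a]) \o X (t + 1%:Z)).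
    by apply: finrv_comp => a; exact: mX.
  by apply/funext => o; apply/val_inj; rewrite val_blk.
rewrite (_ : blk X t (1 + n) = (fun p => cat_tuple p.1 p.2)
  \o joint (blk X t 1) (blk X (t + 1%:Z) n)).
  exact/finrv_comp/finrv_joint.
by apply/funext => o; rewrite blk_cat.
Qed.

Lemma entropy_blk_cat t a b :
  entropy P (blk X t (a + b)) = entropy P (joint (blk X t a) (blk X (t + a%:Z) b)).
Proof.
apply: (entropy_inj P (fun p => cat_tuple p.1 p.2)); last exact: blk_cat.
  by move=> [x y] [x1 y1] /cat_tuple_inj /= [-> ->].
exact/finrv_joint/finrv_blk/finrv_blk.
Qed.

Hypothesis statX : stationary P X.

Lemma entropy_blk_shift t n : entropy P (blk X t n) = block_entropy P X n.
Proof. by congr (- _); apply: eq_bigr => w _; rewrite /pmass statX. Qed.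

Lemma block_entropy_submod a b c :
  block_entropy P X (a + (b + c)) + block_entropy P X b
  <= block_entropy P X (a + b) + block_entropy P X (b + c).
Proof.
have := cond_entropy_joint_le P (finrv_blk 0 a) (finrv_blk (a + b)%N%:Z c) (finrv_blk a%:Z b).
rewrite /cond_entropy.
set f := blk X 0 a; set g := blk X (a + b)%N%:Z c; set h := blk X a%:Z b.
have -> : entropy P (joint (joint f g) h) = block_entropy P X (a + (b + c)).
  symmetry; apply: (entropy_inj P (fun w => cat_tuple w.1.1 (cat_tuple w.2 w.1.2))).
  - by move=> [[x y] z] [[x1 y1] z1] /cat_tuple_inj /= [-> /cat_tuple_inj [-> ->]].
  - by do 2?apply: finrv_joint; exact: finrv_blk.
  - by move=> o; rewrite blk_cat add0r blk_cat -PoszD.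
have -> : entropy P (joint f h) = block_entropy P X (a + b).
  by rewrite -(entropy_blk_shift 0) entropy_blk_cat add0r.
have -> : entropy P (joint g h) = block_entropy P X (b + c).
  rewrite (entropy_jointC P (finrv_blk _ _) (finrv_blk _ _)).
  by rewrite -(entropy_blk_shift a%:Z) entropy_blk_cat PoszD.
rewrite /cond_entropy !entropy_blk_shift; lra.
Qed.

Lemma block_entropy_ge0 n : 0 <= block_entropy P X n.
Proof. exact: (entropy_ge0 P (finrv_blk 0 n)). Qed.

Lemma block_entropy_concave n :
  block_entropy P X n.+2 - block_entropy P X n.+1
  <= block_entropy P X n.+1 - block_entropy P X n.
Proof. by have := block_entropy_submod 1 n 1; rewrite !addn1 !add1n; lra. Qed.

Lemma mutual_info_blk n m :
  mutual_info P (blk X 0 n) (blk X n%:Z m)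
  = block_entropy P X n + block_entropy P X m - block_entropy P X (n + m).
Proof.
rewrite /mutual_info (entropy_blk_shift n%:Z) -(entropy_blk_shift 0 (n + m)).
by rewrite entropy_blk_cat add0r.
Qed.

End BlockEntropy.

Section BinaryEntropy.
Context {R : realType}.

Lemma eta_ge0 (p : R) : 0 <= p <= 1 -> 0 <= Defs.eta p.
Proof.
case/andP => p0 p1.
have : p * ln p <= 0 by rewrite mulr_ge0_le0 ?ln_le0.
have : (1 - p) * ln (1 - p) <= 0 by rewrite mulr_ge0_le0 ?ln_le0 ?subr_ge0 ?gerBl.
rewrite /Defs.eta mulNr; lra.
Qed.

Lemma eta_le_ln2 (p : R) : 0 <= p <= 1 -> Defs.eta p <= ln 2.
Proof.
case/andP => p0 p1; have half_gt0 : (0 : R) < 2^-1 by rewrite invr_gt0.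
have q0 : 0 <= 1 - p by rewrite subr_ge0.
have := xlny_sub_xlnx_le p0 (ltW half_gt0) (fun _ => half_gt0).
have := xlny_sub_xlnx_le q0 (ltW half_gt0) (fun _ => half_gt0).
have half2 : (2^-1 : R) * 2 = 1 by rewrite mulVf ?pnatr_eq0.
rewrite lnV ?posrE // /Defs.eta; lra.
Qed.

Lemma eta_antitone (a b : R) : 2^-1 <= a -> a <= b -> b <= 1 ->
  Defs.eta b <= Defs.eta a.
Proof.
move=> ha ab b1.
have a0 : 0 < a by apply: lt_le_trans ha; rewrite invr_gt0.
have b0 : 0 <= b by apply: ltW; exact: lt_le_trans ab.
have qb0 : 0 <= 1 - b by rewrite subr_ge0.
have qa0 : 0 <= 1 - a by rewrite subr_ge0 (le_trans ab).
have := xlny_sub_xlnx_le b0 (ltW a0) (fun _ => a0).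
have := xlny_sub_xlnx_le qb0 qa0 (fun h => lt_le_trans h (lerB (lexx 1) ab)).
have half2 : (2^-1 : R) * 2 = 1 by rewrite mulVf ?pnatr_eq0.
have ln_le : ln (1 - a) <= ln a.
  have [qa_le0|qa_gt0] := leP (1 - a) 0; first by rewrite ln0 // ln_ge0 // -subr_le0.
  by rewrite ler_ln ?posrE //; lra.
have : (b - a) * (ln (1 - a) - ln a) <= 0.
  by apply: mulr_ge0_le0; rewrite ?subr_ge0 ?subr_le0.
rewrite /Defs.eta mulrBr !mulrBl; lra.
Qed.

Lemma neg_xlnx_le_sqrt (q : R) : 0 <= q -> - (q * ln q) <= 2 * Num.sqrt q.
Proof.
move=> q0; have [->|qn0] := eqVneq q 0; first by rewrite mul0r oppr0 sqrtr0 mulr0.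
pose y := Num.sqrt q; have y_gt0 : 0 < y by rewrite sqrtr_gt0 lt0r qn0.
have qE : q = y * y by rewrite -expr2 sqr_sqrtr.
(* [- y ln y <= 1 - y], doubled since [ln q = 2 ln y] *)
have := xlny_sub_xlnx_le (ltW y_gt0) ler01 (fun _ => ltr01).
rewrite ln1 mulr0 sub0r {1 2}qE lnM ?posrE // -/y => /(ler_wpM2l (ltW y_gt0)) h.
nra.
Qed.

Lemma eta_le_sqrt (p : R) : 0 <= p <= 1 ->
  Defs.eta p <= (1 - p) + 2 * Num.sqrt (1 - p).
Proof.
case/andP => p0 p1; have q0 : 0 <= 1 - p by rewrite subr_ge0.
have := neg_xlnx_le_sqrt (1 - p) q0.
have := xlny_sub_xlnx_le p0 ler01 (fun _ => ltr01).
rewrite ln1 mulr0 sub0r /Defs.eta; lra.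
Qed.

Lemma eta_cvg1 (q : R^nat) : (forall m, 0 <= q m <= 1) -> q @ \oo --> (1 : R) ->
  (fun m => Defs.eta (q m)) @ \oo --> 0.
Proof.
move=> q01 q_cvg.
have gap_cvg : (fun m => 1 - q m) @ \oo --> (0 : R).
  by rewrite -(subrr (1 : R)); apply: cvgB => //; exact: cvg_cst.
have sqrt_cvg : (fun m => Num.sqrt (1 - q m)) @ \oo --> (0 : R).
  by rewrite -sqrtr0; apply: continuous_cvg gap_cvg; exact: sqrt_continuous.
apply: (@squeeze_cvgr _ _ _ _ (fun=> 0) (fun m => (1 - q m) + 2 * Num.sqrt (1 - q m))).
- by apply: nearW => m; rewrite eta_ge0 ?eta_le_sqrt.
- exact: cvg_cst.
- rewrite -[0 : R](addr0 0) -[X in _ + X](mulr0 2).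
  by apply: cvgD gap_cvg _; exact: cvgMr sqrt_cvg.
Qed.

End BinaryEntropy.

Lemma ecard_le {R : realType} (U : set nat) (c : R) :
  (forall l : seq nat, uniq l -> (forall k, k \in l -> U k) -> (size l)%:R <= c) ->
  (ecard U <= c%:E)%E.
Proof.
move=> size_le; rewrite /ecard; apply: lime_le.
  by apply: is_cvg_nneseries => k _ _; case: ifP.
apply: nearW => N /=; rewrite sumEFin lee_fin.
pose l := [seq k <- iota 0 N | `[< U k >]].
have -> : \sum_(0 <= k < N) (if `[< U k >] then 1 else 0 : R) = (size l)%:R.
  by rewrite -sum1_size natr_sum big_filter [RHS]big_mkcond /index_iota subn0.
apply: size_le; first exact/filter_uniq/iota_uniq.
by move=> k; rewrite mem_filter => /andP[/asboolP].
Qed.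

Section StronglyNonergodicProcess.
Context {R : realType} {d : measure_display} {Omega : measurableType d}
  (P : probability Omega R) {A : finType} (X : int -> Omega -> A)
  (Z : nat -> Omega -> bool) (s : nat -> seq A -> bool) (delta : R).
Hypotheses (mX : process_measurable X) (statX : stationary P X)
  (nonergodic : strongly_nonergodic_with P X Z s)
  (delta_gt_half : 2^-1 < delta) (delta_lt1 : delta < 1).

Local Notation H := (block_entropy P X).
Local Notation h := (entropy_rate P X).
Local Notation decoded t n k := (fun o => s k (blk X t n o) == Z k o).
Local Notation prob_decoded t n k := (fine (P [set o | s k (blk X t n o) = Z k o])).

Let finrv_Z k : finrv (Z k).
Proof. by case: nonergodic => -[mZ _ _] _ b; exact: mZ. Qed.

Let finrv_decoded t n k : finrv (decoded t n k).
Proof.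
exact (finrv_comp (finrv_joint (finrv_blk X mX t n) (finrv_Z k))
  (fun p => s k p.1 == p.2)).
Qed.

Let pmass_decoded t n k : pmass P (decoded t n k) true = prob_decoded t n k.
Proof. by rewrite /pmass; congr (fine (P _)); apply/seteqP; split => o /= /eqP. Qed.

Let prob_decodedE t n k :
  P [set o | s k (blk X t n o) = Z k o] = (prob_decoded t n k)%:E.
Proof.
rewrite -pmass_decoded -(pmassE P (finrv_decoded t n k)).
by congr (P _); apply/seteqP; split => o /= /eqP.
Qed.

Let prob_decoded_ge0_le1 t n k : 0 <= prob_decoded t n k <= 1.
Proof. by rewrite -pmass_decoded pmass_ge0 (pmass_le1 P (finrv_decoded t n k)). Qed.

Let rate_le_diff m n : n%:R * h <= H (m + n)%N - H m.
Proof.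
exact: rate_le_concave_diff (block_entropy_ge0 P X mX)
  (block_entropy_concave P X mX statX) m n.
Qed.

Lemma excess_entropy_ge_decoding n m l : uniq l ->
  (size l)%:R * ln 2
  - \sum_(k <- l) Defs.eta (prob_decoded 0 n k)
  - \sum_(k <- l) Defs.eta (prob_decoded n%:Z m k)
  <= H n - n%:R * h.
Proof.
move=> ul; have := mutual_info_ge_decoding P (blk X 0 n) (blk X n%:Z m) Z
  (fun k y => s k y) (fun k y => s k y) l (finrv_blk X mX 0 n) (finrv_blk X mX n%:Z m) finrv_Z.
rewrite entropy_fair_bits; [|by case: nonergodic|by []].
rewrite mutual_info_blk // !(eq_bigr _ (fun k _ => congr1 Defs.eta (pmass_decoded _ _ k))).
have := rate_le_diff m n; rewrite addnC; lra.
Qed.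

Lemma excess_entropy_ge_U_seq n l : uniq l -> (forall k, k \in l -> U_set P X Z s delta n k) ->
  (size l)%:R * (ln 2 - Defs.eta delta) <= H n - n%:R * h.
Proof.
move=> ul lU.
have past_le : \sum_(k <- l) Defs.eta (prob_decoded 0 n k) <= (size l)%:R * Defs.eta delta.
  rewrite -sum1_size natr_sum mulr_suml !big_seq; apply: ler_sum => k kl.
  have /andP[_ p_le1] := prob_decoded_ge0_le1 0 n k.
  rewrite mul1r eta_antitone ?(ltW delta_gt_half) //.
  by have := lU k kl; rewrite /U_set /= prob_decodedE lee_fin.
have future_cvg : (fun m => \sum_(k <- l) Defs.eta (prob_decoded n%:Z m k))
    @ \oo --> (0 : R).
  rewrite -[X in _ --> X](@big1_eq R 0 +%R nat l xpredT).
  apply: cvg_big => [|k _]; first exact: add_continuous.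
  by apply: eta_cvg1 => [m|]; [exact: prob_decoded_ge0_le1 | exact: nonergodic.2].
have lim_cvg : (fun m => H n - n%:R * h + \sum_(k <- l) Defs.eta (prob_decoded n%:Z m k))
    @ \oo --> H n - n%:R * h + 0.
  by apply: cvgD future_cvg; exact: cvg_cst.
rewrite -[leRHS]addr0 -(cvg_lim (@Rhausdorff R) lim_cvg).
apply: (limr_ge (cvgP _ lim_cvg)); near=> m.
by have := excess_entropy_ge_decoding n m l ul; lra.
Unshelve. all: end_near.
Qed.

Let ln2_sub_eta_ge0 : 0 <= ln 2 - Defs.eta delta.
Proof.
rewrite subr_ge0 eta_le_ln2 // (ltW delta_lt1) andbT.
by apply/ltW/(lt_trans _ delta_gt_half); rewrite invr_gt0.
Qed.

Lemma ecard_U_set_le n :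
  ((ln 2 - Defs.eta delta)%:E * ecard (U_set P X Z s delta n)
    <= (H n - n%:R * h)%:E)%E.
Proof.
have [->|c_neq0] := eqVneq (ln 2 - Defs.eta delta) 0.
  rewrite mul0e lee_fin; have := rate_le_diff 0 n.
  by have := block_entropy_ge0 P X mX 0; rewrite add0n; lra.
have c_gt0 : 0 < ln 2 - Defs.eta delta by rewrite lt0r c_neq0 ln2_sub_eta_ge0.
have ecard_U_le : (ecard (U_set P X Z s delta n)
    <= ((H n - n%:R * h) / (ln 2 - Defs.eta delta))%:E)%E.
  by apply: ecard_le => l ul lU; rewrite ler_pdivlMr //; exact: excess_entropy_ge_U_seq.
rewrite -[H n - n%:R * h](divfK c_neq0) mulrC EFinM.
by apply: lee_wpmul2l ecard_U_le; rewrite lee_fin ltW.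
Qed.

Lemma HU_bounds n : ((h * n%:R)%:E <= HU P X Z s delta n <= (H n)%:E)%E.
Proof.
rewrite /HU; apply/andP; split.
  rewrite leeDl // mule_ge0 ?lee_fin ?ln2_sub_eta_ge0 //.
  by apply: nneseries_ge0 => k _ _; case: ifP.
apply: le_trans (leeD2l _ (ecard_U_set_le n)) _.
by rewrite -EFinD lee_fin; lra.
Qed.

End StronglyNonergodicProcess.

Theorem theorem8 (R : realType) (d : measure_display) (Omega : measurableType d)
  (P : probability Omega R) (A : finType) (X : int -> Omega -> A)
  (Z : nat -> Omega -> bool) (s : nat -> seq A -> bool) (delta : R) :
  process_measurable X ->
  stationary P X ->
  strongly_nonergodic_with P X Z s ->
  2^-1 < delta < 1 ->
  [/\ forall n : nat, (HU P X Z s delta n <= (block_entropy P X n)%:E)%E,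
      (fun n : nat => block_entropy P X n / n%:R) @ \oo --> entropy_rate P X &
      (fun n : nat => HU P X Z s delta n * ((n%:R)^-1)%:E)%E @ \oo
        --> (entropy_rate P X)%:E].
Proof.
move=> mX statX nonergodic /andP[delta_gt_half delta_lt1].
have HU_le n := HU_bounds P X Z s delta mX statX nonergodic delta_gt_half delta_lt1 n.
have rate_cvg : (fun n => block_entropy P X n / n%:R) @ \oo --> entropy_rate P X.
  exact: cvg_concave_slope (block_entropy_ge0 P X mX) (block_entropy_concave P X mX statX).
split => [n||]; [by case/andP: (HU_le n) | exact: rate_cvg |].
apply: (@squeeze_cvge _ _ _ _ (fun=> (entropy_rate P X)%:E) _
  (fun n => (block_entropy P X n / n%:R)%:E)); last 2 first.
- exact: cvg_cst.
- by apply/fine_cvgP; split; [exact: nearW | exact: rate_cvg].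
near=> n; have n_gt0 : (0 < n%:R :> R) by rewrite ltr0n; near: n; exists 1%N.
have /andP[lower upper] := HU_le n.
rewrite -(mulfK (lt0r_neq0 n_gt0) (entropy_rate P X)).
rewrite (EFinM (entropy_rate P X * n%:R)) (EFinM (block_entropy P X n)).
by apply/andP; split; apply: lee_wpmul2r => //; rewrite lee_fin invr_ge0 ltW.
Unshelve. all: end_near.
Qed.
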